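(* Let $(A_1,\dots,A_n)$ and $(B_1,\dots,B_m)$ be nonempty sequences of words, and let $(g_1,\dots,g_r)$ and $(h_1,\dots,h_t)$ be the $n$-bounded, respectively $m$-bounded, index collections maximal for them. Let $k=\max(\{0\}\cup\{i\mid 1\le i\le r,\ B_{h_1}\precsim A_{g_i}\})$. Then the $(n+m)$-bounded index collection $(g_1,\dots,g_k,n+h_1,\dots,n+h_t)$ is maximal for the sequence $(A_1,\dots,A_n,B_1,\dots,B_m)$.
   Context: Words are finite strings over $\mathbb{N}$; $\Lambda$ is the empty word. For $k\in\mathbb{N}$, $\mathsf{S}_k$ is the set of words all of whose symbols are $\ge k$. Given a linear preorder $\precsim$ with $A\sim B$ iff $A\precsim B\wedge B\precsim A$ and $A\prec B$ iff $A\precsim B\wedge\neg B\precsim A$, a finite sequence $(A_1,\dots,A_p)$ is lexicographically not greater than $(B_1,\dots,B_q)$ iff either $p\le q$ and $A_i\sim B_i$ for all $i\le p$, or there is $s<\min(p,q)$ with $A_i\sim B_i$ for $i\le s$ and $A_{s+1}\prec B_{s+1}$. A lexicographically maximal subsequence of a finite sequence is a subsequence that is lexicographically not less than every subsequence. The linear preorder $\precsim$ on words is defined by recursion on (largest symbol of $AB$) $-$ (smallest symbol of $AB$): $\Lambda\precsim\Lambda$; if $AB$ is nonempty with minimal symbol $n$, write uniquely $A=A_1n\cdots nA_k$, $B=B_1n\cdots nB_l$ ($k,l\ge1$) with $A_i,B_j\in\mathsf{S}_{n+1}$ (possibly empty); let $C,D$ be lexicographically maximal subsequences of $(A_1,\dots,A_k)$,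 $(B_1,\dots,B_l)$; then $A\precsim B$ iff $C$ is lexicographically not greater than $D$. An index collection is a strictly increasing finite sequence of positive integers; it is $n$-bounded if all entries are $\le n$; it is maximal for $(A_1,\dots,A_n)$ if $(A_{s_1},\dots,A_{s_m})$ is a lexicographically maximal subsequence of $(A_1,\dots,A_n)$. For a nonempty sequence there is exactly one maximal index collection. *)

From mathcomp Require Import all_boot.
Set Implicit Arguments. Unset Strict Implicit. Unset Printing Implicit Defensive.

Definition word := seq nat.

Section Lex.
Variable T : Type.
Variable le : T -> T -> Prop.
Definition sim (x y : T) : Prop := le x y /\ le y x.
Definition ltp (x y : T) : Prop := le x y /\ ~ le y x.

Definition lexle (x0 : T) (a b : seq T) : Prop :=
  (size a <= size b /\ forall i, i < size a -> sim (nth x0 a i) (nth x0 b i))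
  \/ exists s, s < minn (size a) (size b) /\
       (forall i, i < s -> sim (nth x0 a i) (nth x0 b i)) /\
       ltp (nth x0 a s) (nth x0 b s).
End Lex.

Definition lexmax (le : word -> word -> Prop) (c s : seq word) : Prop :=
  subseq c s /\ forall c', subseq c' s -> lexle le [::] c' c.

(* Split a word at all occurrences of the symbol n:
   A = A_1 n A_2 n ... n A_k  gives [:: A_1; ...; A_k]. *)
Fixpoint split_at (n : nat) (s : word) : seq word :=
  match s with
  | [::] => [:: [::]]
  | x :: s' =>
      if x == n then [::] :: split_at n s'
      else match split_at n s' with
           | c :: cs => (x :: c) :: cs
           | [::] => [:: [:: x]]
           end
  end.

Definition minsym (s : word) : nat := foldr minn (head 0 s) s.
Definition maxsym (s : word) : nat := foldr maxn 0 s.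

(* The recursive definition of the preorder, with fuel standing for the
   recursion on (largest symbol) - (smallest symbol) of AB. *)
Fixpoint wle_f (f : nat) (A B : word) : Prop :=
  match f with
  | 0 => True
  | f'.+1 =>
      match A ++ B with
      | [::] => True
      | _ =>
        let n := minsym (A ++ B) in
        exists C D,
          lexmax (wle_f f') C (split_at n A) /\
          lexmax (wle_f f') D (split_at n B) /\
          lexle (wle_f f') [::] C D
      end
  end.

(* A ≾ B; the fuel (max - min) + 1 is sufficient for the recursion. *)
Definition wle (A B : word) : Prop :=
  wle_f (maxsym (A ++ B) - minsym (A ++ B)).+1 A B.

(* g is an index collection (1-based, strictly increasing, positive),
   bounded by size s, and maximal for the sequence s. *)
Definition max_index_coll (s : seq word) (g : seq nat) : Prop :=
  sorted ltn g /\ all (fun i => 0 < i <= size s) g /\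
  lexmax wle [seq nth [::] s i.-1 | i <- g] s.

(* Classical boolean reflection of a proposition (used to form the max in
   the statement). *)
From Stdlib Require Import ClassicalEpsilon.
Definition asb (P : Prop) : bool :=
  if excluded_middle_informative P then true else false.

(* Totality and transitivity of the preorder are proved by induction on the fuel of
   [wle_f]: on words with symbols in [lo, hi], splitting at [lo] yields pieces with
   symbols in [lo+1, hi], and comparing maximal subsequences lexicographically inherits
   totality and transitivity from the order on the pieces.

   For a total preorder, a maximal subsequence of s is, up to equivalence, the sequence
   of right-to-left records of s (the entries that dominate everything after them).
   The records of s ++ t are those of t preceded by the records of s that dominate
   max t ~ B_{h_1}; as the records of s are nonincreasing, these form a prefix of
   length k. *)

From mathcomp Require Import all_boot zify.
From Stdlib Require Import Classical ClassicalEpsilon.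
Set Implicit Arguments. Unset Strict Implicit. Unset Printing Implicit Defensive.

Lemma asbP (P : Prop) : reflect P (asb P).
Proof. by rewrite /asb; case: excluded_middle_informative => H; constructor. Qed.

Lemma all_subseq (T : eqType) (P : pred T) s1 s2 : subseq s1 s2 -> all P s2 -> all P s1.
Proof. by move=> /mem_subseq sub12 /allP P2; apply/allP => x /sub12 /P2. Qed.

Section PairwisePrefix.
Variables (T : Type) (r : rel T) (q : pred T).
Hypothesis q_down : forall x y, r x y -> q y -> q x.

Lemma pairwise_count0 x s : pairwise r (x :: s) -> ~~ q x -> count q s = 0.
Proof.
rewrite pairwise_cons => /andP[r_x _] nqx.
apply/eqP; rewrite -leqn0 leqNgt -has_count -all_predC.
by apply: sub_all r_x => y r_xy; apply: contra nqx; apply: q_down.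
Qed.

Lemma filter_pairwise s : pairwise r s -> filter q s = take (count q s) s.
Proof.
elim: s => [|x s IHs] // pw_xs; have pw_s : pairwise r s by case/andP: pw_xs.
rewrite /=; case: ifP => [_|/negbT nqx]; first by rewrite add1n IHs.
have count0 := pairwise_count0 pw_xs nqx.
by move: (size_filter q s); rewrite count0; case: (filter q s).
Qed.

Lemma nth_pairwise x0 s i : pairwise r s -> i < size s -> q (nth x0 s i) = (i < count q s).
Proof.
elim: s i => [|x s IHs] // i pw_xs; have pw_s : pairwise r s by case/andP: pw_xs.
have [qx|nqx] := boolP (q x); rewrite /=.
  by rewrite qx add1n; case: i => [|i] //=; rewrite !ltnS; apply: IHs.
have count0 := pairwise_count0 pw_xs nqx.
case: i => [|i]; rewrite /= (negbTE nqx) count0 // ltnS.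
by move=> /(IHs i pw_s) ->; rewrite count0.
Qed.
End PairwisePrefix.

Lemma bigmax_prefix (P : pred nat) n k : k <= n -> (forall i, i < n -> P i.+1 = (i < k)) ->
  \max_(1 <= i < n.+1 | P i) i = k.
Proof.
move=> le_kn P_prefix; apply/eqP; rewrite eqn_leq; apply/andP; split.
  apply/bigmax_leqP_seq => -[|i]; rewrite mem_index_iota // => /andP[_ lt_in].
  by rewrite P_prefix.
case: k le_kn P_prefix => [//|k] lt_kn P_prefix.
by apply: leq_bigmax_seq; rewrite ?mem_index_iota ?P_prefix.
Qed.

Section IndexCollections.
Variables (n m : nat) (g h : seq nat).
Hypotheses (g_sorted : sorted ltn g) (g_bnd : all (fun i => 0 < i <= n) g).
Hypotheses (h_sorted : sorted ltn h) (h_bnd : all (fun j => 0 < j <= m) h).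

Lemma sorted_shift_cat k : sorted ltn (take k g ++ [seq n + j | j <- h]).
Proof.
rewrite sorted_pairwise ?pairwise_cat; last exact: ltn_trans.
apply/and3P; split.
- apply/allrelP => i _ /mem_take/(allP g_bnd)/andP[_ le_in] /mapP[j /(allP h_bnd)/andP[j_gt0 _] ->].
  by apply: leq_ltn_trans le_in _; rewrite -{1}[n]addn0 ltn_add2l.
- by rewrite -sorted_pairwise; [exact: take_sorted|exact: ltn_trans].
- rewrite -sorted_pairwise ?sorted_map; last exact: ltn_trans.
  by apply: sub_sorted h_sorted => i j; rewrite /relpre /= ltn_add2l.
Qed.

Lemma bounded_shift_cat k : all (fun i => 0 < i <= n + m) (take k g ++ [seq n + j | j <- h]).
Proof.
rewrite all_cat all_map; apply/andP; split.
- apply/allP => i /mem_take/(allP g_bnd)/andP[-> le_in].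
  exact: leq_trans le_in (leq_addr _ _).
- by apply: sub_all h_bnd => j /andP[j_gt0 le_jm] /=; rewrite ltn_addl ?leq_add2l.
Qed.

Lemma map_nth_shift_cat k (T : Type) (x0 : T) (s t : seq T) : n = size s ->
  [seq nth x0 (s ++ t) i.-1 | i <- take k g ++ [seq n + j | j <- h]] =
  take k [seq nth x0 s i.-1 | i <- g] ++ [seq nth x0 t j.-1 | j <- h].
Proof.
move=> n_s; rewrite map_cat map_take -map_comp; congr (take _ _ ++ _); apply/eq_in_map.
- by move=> i /(allP g_bnd)/andP[i_gt0 le_in]; rewrite /= nth_cat -n_s prednK // le_in.
- move=> j /(allP h_bnd)/andP[j_gt0 _] /=.
  by rewrite -(prednK j_gt0) addnS /= nth_cat n_s ltnNge leq_addr /= addKn.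
Qed.
End IndexCollections.

(** * Lexicographic order *)

Section Lexicographic.
Variables (T : Type) (le : T -> T -> Prop) (x0 : T).
Implicit Types (x y : T) (a b : seq T).

Lemma lexle_nill b : lexle le x0 [::] b.
Proof. by left. Qed.

Lemma lexle_nilr {a} : lexle le x0 a [::] -> a = [::].
Proof. by case: a => // x a [[]|[s []]]. Qed.

Lemma lexle_cons x y a b :
  lexle le x0 (x :: a) (y :: b) <-> ltp le x y \/ sim le x y /\ lexle le x0 a b.
Proof.
split.
- case=> [[ab sim_ab]|[[|s] [lt_s [sim_s lt_at_s]]]].
  + right; split; first exact: (sim_ab 0).
    by left; split=> // i lt_ia; apply: (sim_ab i.+1).
  + by left.
  + right; split; first exact: (sim_s 0).
    right; exists s; rewrite minnSS ltnS in lt_s.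
    by split=> //; split=> // i lt_is; apply: (sim_s i.+1).
- case=> [lt_xy|[sim_xy [[ab sim_ab]|[s [lt_s [sim_s lt_at_s]]]]]].
  + by right; exists 0; rewrite minnSS; split=> //; split.
  + by left; split=> // -[|i] //= /sim_ab.
  + right; exists s.+1; rewrite minnSS ltnS; do 2!split=> //.
    by case=> [|i] //= /sim_s.
Qed.

Lemma lexle_single x y : lexle le x0 [:: x] [:: y] <-> le x y.
Proof.
rewrite lexle_cons; split; first by case=> [[]|[[]]].
move=> le_xy; case: (classic (le y x)) => [le_yx|nle_yx].
- by right; split; [split|exact: lexle_nill].
- by left; split.
Qed.

Fixpoint sim_seq a b : Prop :=
  match a, b with
  | [::], [::] => True
  | x :: a', y :: b' => sim le x y /\ sim_seq a' b'
  | _, _ => False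
  end.

Lemma sim_seq_size a b : sim_seq a b -> size a = size b.
Proof. by elim: a b => [|x a IHa] [|y b] //= [_ /IHa ->]. Qed.

Lemma sim_seq_lexle a b : sim_seq a b -> lexle le x0 a b.
Proof.
elim: a b => [|x a IHa] [|y b] //= => [_|[sim_xy /IHa lexle_ab]]; first exact: lexle_nill.
by apply/lexle_cons; right.
Qed.

Lemma lexle_antisym a b : lexle le x0 a b -> lexle le x0 b a -> sim_seq a b.
Proof.
elim: a b => [|x a IHa] [|y b] //; [by move=> _ /lexle_nilr|by move=> /lexle_nilr|].
move=> /lexle_cons[[_ nle_yx]|[sim_xy lexle_ab]] /lexle_cons; first by case=> [[]|[[]]].
case=> [[_ nle_xy]|[_ lexle_ba]]; first by case: sim_xy.
by split; last exact: IHa.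
Qed.

Lemma sim_seq_cat a b c d : sim_seq a b -> sim_seq c d -> sim_seq (a ++ c) (b ++ d).
Proof. by move=> + sim_cd; elim: a b => [|x a IHa] [|y b] //= [sim_xy /IHa]. Qed.

Lemma sim_seq_take n a b : sim_seq a b -> sim_seq (take n a) (take n b).
Proof.
by elim: a b n => [|x a IHa] [|y b] [|n] //= [sim_xy sim_ab]; split; last exact: IHa.
Qed.

Lemma sim_seq_nth a b i : sim_seq a b -> i < size a -> sim le (nth x0 a i) (nth x0 b i).
Proof. by elim: a b i => [|x a IHa] [|y b] //= [|i] [sim_xy sim_ab] //; apply: IHa. Qed.

Lemma count_sim_seq (q : pred T) a b :
  (forall x y, sim le x y -> q x = q y) -> sim_seq a b -> count q a = count q b.
Proof.
by move=> q_sim; elim: a b => [|x a IHa] [|y b] //= [/q_sim -> /IHa ->].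
Qed.
End Lexicographic.
Arguments lexle_nilr {T le x0 a}.

Section LexicographicPreorder.
Variables (T : Type) (le : T -> T -> Prop) (x0 : T) (S : pred T).
Hypothesis le_total : {in S &, forall x y, le x y \/ le y x}.
Hypothesis le_trans : {in S & &, forall x y z, le x y -> le y z -> le x z}.
Implicit Types (x y : T) (a b : seq T).

Lemma lexle_total a b : all S a -> all S b -> lexle le x0 a b \/ lexle le x0 b a.
Proof.
elim: a b => [|x a IHa] [|y b] /=; try by [left; apply: lexle_nill|right; apply: lexle_nill].
move=> /andP[Sx Sa] /andP[Sy Sb]; rewrite !lexle_cons.
case: (classic (le x y)) (classic (le y x)) => [le_xy|nle_xy] [le_yx|nle_yx].
- by case: (IHa b Sa Sb) => ?; [left|right]; right; do !split.
- by left; left.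
- by right; left.
- by case: (le_total Sx Sy).
Qed.

Lemma lexle_trans a b c : all S a -> all S b -> all S c ->
  lexle le x0 a b -> lexle le x0 b c -> lexle le x0 a c.
Proof.
elim: a b c => [|x a IHa] [|y b] [|z c] //=; try by move=> *; apply: lexle_nill.
- by move=> _ _ _ /lexle_nilr.
- by move=> _ _ _ _ /lexle_nilr.
move=> /andP[Sx Sa] /andP[Sy Sb] /andP[Sz Sc]; rewrite !lexle_cons.
case=> [[le_xy nle_yx]|[[le_xy le_yx] lexle_ab]].
- case=> [[le_yz _]|[[le_yz _] _]]; left; split=> [|le_zx];
    by [apply: le_trans Sx Sy Sz le_xy le_yz|apply: nle_yx; apply: le_trans Sy Sz Sx le_yz le_zx].
- case=> [[le_yz nle_zy]|[[le_yz le_zy] lexle_bc]].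
  + left; split; first exact: le_trans Sx Sy Sz le_xy le_yz.
    by move=> le_zx; apply: nle_zy; apply: le_trans Sz Sx Sy le_zx le_xy.
  + right; split; last exact: IHa lexle_ab lexle_bc.
    by split; [apply: le_trans Sx Sy Sz le_xy le_yz|apply: le_trans Sz Sy Sx le_zy le_yx].
Qed.
End LexicographicPreorder.

Section LexicographicCongruence.
Variables (T : Type) (le1 le2 : T -> T -> Prop) (x0 : T) (S : pred T).
Hypothesis le12 : {in S &, forall x y, le1 x y <-> le2 x y}.

Lemma lexle_congr a b : all S a -> all S b -> (lexle le1 x0 a b <-> lexle le2 x0 a b).
Proof.
elim: a b => [|x a IHa] [|y b] //=.
- by split=> _; apply: lexle_nill.
- by split=> _; apply: lexle_nill.
- by split=> /lexle_nilr.
move=> /andP[Sx Sa] /andP[Sy Sb].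
by rewrite !lexle_cons /ltp /sim (le12 Sx Sy) (le12 Sy Sx) (IHa b Sa Sb).
Qed.
End LexicographicCongruence.

(** * Maximal subsequences *)

Section MaximalSubsequences.
Variable le : word -> word -> Prop.

Lemma lexmax_single x c : le x x -> lexmax le c [:: x] <-> c = [:: x].
Proof.
move=> le_xx; split=> [[sub_c max_c]|->].
- have := max_c _ (subseq_refl _).
  case: c sub_c {max_c} => [_ /lexle_nilr //|y [|z c']]; last by move/size_subseq.
  by rewrite sub1seq mem_seq1 => /eqP ->.
- split=> // -[|y [|z c']]; [by move=> _; apply: lexle_nill| |by move/size_subseq].
  by rewrite sub1seq mem_seq1 => /eqP ->; apply/lexle_single.
Qed.

Lemma lexmax_neq0 c s : lexmax le c s -> s != [::] -> c != [::].
Proof.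
case: s => // x s [_ max_c] _; apply/eqP => c0.
by have := max_c [:: x]; rewrite sub1seq mem_head c0 => /(_ isT) /lexle_nilr.
Qed.

(* The right-to-left records of [s]. *)
Fixpoint greedy (s : seq word) : seq word :=
  if s is x :: s' then
    if all (fun w => asb (le w x)) s' then x :: greedy s' else greedy s'
  else [::].

Lemma greedy_subseq s : subseq (greedy s) s.
Proof.
elim: s => [|x s IHs] //=; case: ifP => _; first by rewrite eqxx.
exact: subseq_trans IHs (subseq_cons s x).
Qed.

Lemma greedy_pairwise s : pairwise (fun x y => asb (le y x)) (greedy s).
Proof.
elim: s => [|x s IHs] //=; case: ifP => // dom_x.
by rewrite pairwise_cons IHs (all_subseq (greedy_subseq s) dom_x).
Qed.

Variable S : pred word.
Hypothesis le_total : {in S &, forall x y, le x y \/ le y x}.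
Hypothesis le_trans : {in S & &, forall x y z, le x y -> le y z -> le x z}.

Lemma le_refl_in x : x \in S -> le x x.
Proof. by move=> Sx; case: (le_total Sx Sx). Qed.

Lemma greedy_head s : all S s -> s != [::] ->
  exists y l, [/\ greedy s = y :: l, y \in s & {in s, forall w, le w y}].
Proof.
elim: s => [|x s IHs] //= /andP[Sx Ss] _.
case: ifP => [/allP dom_x|/negbT/allPn[w ws /asbP nle_wx]].
  exists x, (greedy s); split=> //; first exact: mem_head.
  by move=> w; rewrite inE => /predU1P[->|/dom_x/asbP //]; apply: le_refl_in.
have [|y [l [-> ys max_y]]] := IHs Ss; first by case: (s) ws.
have Sw := allP Ss w ws; have Sy := allP Ss y ys.
have le_xy : le x y.
  by case: (le_total Sx Sw) => // le_xw; apply: le_trans Sx Sw Sy le_xw (max_y w ws).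
exists y, l; split=> //; first by rewrite inE ys orbT.
by move=> v; rewrite inE => /predU1P[->|/max_y].
Qed.

Lemma greedy_lexmax s : all S s -> lexmax le (greedy s) s.
Proof.
move=> Ss; split; first exact: greedy_subseq.
elim: s Ss => [_ c|x s IHs /andP[Sx Ss] [|y c]] /=.
- by move=> /eqP ->; apply: lexle_nill.
- by move=> _; apply: lexle_nill.
move=> sub_yc; case: ifP => [/allP dom_x|/negbT/allPn[w ws /asbP nle_wx]].
- apply/lexle_cons; case: eqP sub_yc => [-> /IHs-/(_ Ss) lexle_c|_ sub_yc].
    by right; split=> //; split; apply: le_refl_in.
  have ys : y \in s by apply: (mem_subseq sub_yc); apply: mem_head.
  have /asbP le_yx := dom_x y ys.
  case: (classic (le x y)) => le_xy; last by left.
  right; split=> //; apply: IHs Ss _ _.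
  exact: subseq_trans (subseq_cons c y) sub_yc.
- case: eqP sub_yc => [-> _|_]; last exact: IHs.
  have [|z [l [-> zs max_z]]] := greedy_head Ss; first by case: (s) ws.
  have Sz := allP Ss z zs; have nle_zx : ~ le z x.
    by move=> le_zx; apply: nle_wx; apply: le_trans (allP Ss w ws) Sz Sx (max_z w ws) le_zx.
  apply/lexle_cons; left; split=> //.
  by case: (le_total Sx Sz) => // /nle_zx.
Qed.
End MaximalSubsequences.

Definition lexmax_le (le : word -> word -> Prop) (s t : seq word) : Prop :=
  exists c d, lexmax le c s /\ lexmax le d t /\ lexle le [::] c d.

Section LexmaxCongruence.
Variables (le1 le2 : word -> word -> Prop) (S : pred word).
Hypothesis le12 : {in S &, forall x y, le1 x y <-> le2 x y}.

Lemma lexmax_congr c s : all S s -> (lexmax le1 c s <-> lexmax le2 c s).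
Proof.
move=> Ss; have S_sub c' : subseq c' s -> all S c' by move/all_subseq; apply.
split=> -[sub_c max_c]; split=> // c' sub_c'.
- by rewrite -(lexle_congr _ le12) ?S_sub //; apply: max_c.
- by rewrite (lexle_congr _ le12) ?S_sub //; apply: max_c.
Qed.

Lemma lexmax_le_congr s t : all S s -> all S t -> (lexmax_le le1 s t <-> lexmax_le le2 s t).
Proof.
move=> Ss St; split=> -[c [d [max_c [max_d lexle_cd]]]]; exists c, d;
  have Sc := all_subseq max_c.1 Ss; have Sd := all_subseq max_d.1 St;
  by split; [|split]; [apply/(lexmax_congr _ Ss)|apply/(lexmax_congr _ St)|apply/(lexle_congr _ le12 Sc Sd)].
Qed.
End LexmaxCongruence.

Section LexmaxPreorder.
Variables (le : word -> word -> Prop) (S : pred word).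
Hypothesis le_total : {in S &, forall x y, le x y \/ le y x}.
Hypothesis le_trans : {in S & &, forall x y z, le x y -> le y z -> le x z}.

Lemma lexmax_le_total s t : all S s -> all S t -> lexmax_le le s t \/ lexmax_le le t s.
Proof.
move=> Ss St; have max_s := greedy_lexmax le_total le_trans Ss.
have max_t := greedy_lexmax le_total le_trans St.
have [lexle_st|lexle_ts] := lexle_total [::] le_total (all_subseq max_s.1 Ss) (all_subseq max_t.1 St).
- by left; exists (greedy le s), (greedy le t).
- by right; exists (greedy le t), (greedy le s).
Qed.

Lemma lexmax_le_trans s t u : all S s -> all S t -> all S u ->
  lexmax_le le s t -> lexmax_le le t u -> lexmax_le le s u.
Proof.
move=> Ss St Su [c [d [max_c [max_d lexle_cd]]]] [d' [e [max_d' [max_e lexle_d'e]]]].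
exists c, e; split=> //; split=> //.
have Sc := all_subseq max_c.1 Ss; have Sd := all_subseq max_d.1 St.
have Sd' := all_subseq max_d'.1 St; have Se := all_subseq max_e.1 Su.
have lexle_de := lexle_trans le_trans Sd Sd' Se (max_d'.2 _ max_d.1) lexle_d'e.
exact: (lexle_trans le_trans Sc Sd Se lexle_cd lexle_de).
Qed.
End LexmaxPreorder.

Lemma lexmax_le_single (le : word -> word -> Prop) x y :
  le x x -> le y y -> (lexmax_le le [:: x] [:: y] <-> le x y).
Proof.
move=> le_xx le_yy; split=> [[c [d [/lexmax_single-/(_ le_xx) -> [/lexmax_single-/(_ le_yy) ->]]]]|le_xy].
  by move/lexle_single.
by exists [:: x], [:: y]; split; [|split]; [apply/lexmax_single|apply/lexmax_single|apply/lexle_single].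
Qed.

(** * Totality and transitivity of [wle] *)

Lemma all_split_at (P : pred nat) n X : all P X -> all (all (predD1 P n)) (split_at n X).
Proof.
elim: X => [|x X IHX] //= /andP[Px /IHX]; case: eqP => [//|/eqP neq_xn].
by case: (split_at n X) => [|c cs] /= => [_|/andP[-> ->]]; rewrite /= neq_xn Px.
Qed.

Lemma split_at_notin n X : n \notin X -> split_at n X = [:: X].
Proof.
by elim: X => [|x X IHX] //=; rewrite inE negb_or eq_sym => /andP[/negbTE -> /IHX ->].
Qed.

Lemma foldr_minn_le d s z : z \in d :: s -> foldr minn d s <= z.
Proof.
elim: s => [|x s IHs] /=; first by rewrite mem_seq1 => /eqP ->.
rewrite !inE geq_min => /or3P[/eqP z_d|/eqP->|zs]; first 2 last; rewrite ?leqnn //.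
- by rewrite IHs ?orbT // inE zs orbT.
- by rewrite IHs ?orbT // z_d mem_head.
Qed.

Lemma foldr_minn_mem d s : foldr minn d s \in d :: s.
Proof.
elim: s => [|x s IHs] /=; first exact: mem_head.
rewrite /minn; case: ifP => _; first by rewrite !inE eqxx orbT.
by move: IHs; rewrite !inE => /orP[->|->]; rewrite ?orbT.
Qed.

Lemma minsym_le s z : z \in s -> minsym s <= z.
Proof. by case: s => // x s zs; apply: foldr_minn_le; rewrite inE zs orbT. Qed.

Lemma mem_minsym s : s != [::] -> minsym s \in s.
Proof.
case: s => // x s _; rewrite /minsym [head _ _]/=.
by have := foldr_minn_mem x (x :: s); rewrite inE => /predU1P[->|]; first exact: mem_head.
Qed.

Lemma leq_maxsym s z : z \in s -> z <= maxsym s.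
Proof.
elim: s => [|x s IHs] //=; rewrite inE leq_max => /predU1P[->|/IHs ->].
  by rewrite leqnn.
by rewrite orbT.
Qed.

Lemma maxsym_leq s n : (maxsym s <= n) = all (fun z => z <= n) s.
Proof. by elim: s => [|x s IHs] //=; rewrite geq_max IHs. Qed.

Definition in_range (lo hi : nat) : pred word := fun X => all (fun z => lo <= z <= hi) X.

Lemma in_range_split_at lo hi X :
  in_range lo hi X -> all (in_range lo.+1 hi) (split_at lo X).
Proof.
move/(all_split_at lo); apply: sub_all => p; apply: sub_all => z /=.
by rewrite ltn_neqAle eq_sym => /andP[-> /andP[-> ->]].
Qed.

Lemma in_range_minsym_maxsym s : in_range (minsym s) (maxsym s) s.
Proof. by apply/allP => z zs; rewrite minsym_le ?leq_maxsym. Qed.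

Lemma wle_f_nil f : wle_f f [::] [::].
Proof. by case: f. Qed.

Lemma wle_fS f X Y : X ++ Y != [::] ->
  let n := minsym (X ++ Y) in
  wle_f f.+1 X Y <-> lexmax_le (wle_f f) (split_at n X) (split_at n Y).
Proof. by rewrite /=; case: (X ++ Y). Qed.

Record fuel_sound (f lo hi : nat) : Prop := FuelSound {
  fuel_stable : forall f', f <= f' ->
    {in in_range lo hi &, forall X Y, wle_f f' X Y <-> wle_f f X Y};
  fuel_total : {in in_range lo hi &, forall X Y, wle_f f X Y \/ wle_f f Y X};
  fuel_trans : {in in_range lo hi & &, forall X Y Z,
    wle_f f X Y -> wle_f f Y Z -> wle_f f X Z}
}.

Lemma fuel_sound0 lo hi : hi < lo -> fuel_sound 0 lo hi.
Proof.
move=> lt_hi_lo; have nil_of X : in_range lo hi X -> X = [::].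
  by case: X => //= z X /andP[/andP[le_lo_z le_z_hi] _]; move: lt_hi_lo; lia.
split=> [f' _ X Y /nil_of -> /nil_of ->|X Y _ _|//]; [by split=> _; apply: wle_f_nil|by left].
Qed.

(* If [lo] occurs in [X ++ Y] it is the least symbol; otherwise [X] and [Y] are
   single pieces and the extra fuel does not matter. *)
Lemma wle_f_split f F lo hi X Y : fuel_sound f lo.+1 hi -> f <= F ->
  in_range lo hi X -> in_range lo hi Y ->
  wle_f F.+1 X Y <-> lexmax_le (wle_f F) (split_at lo X) (split_at lo Y).
Proof.
move=> [stable total _] le_fF Xr Yr.
have [lo_XY|] := boolP (lo \in X ++ Y).
  have XY0 : X ++ Y != [::] by case: (X ++ Y) lo_XY.
  have XYr : in_range lo hi (X ++ Y) by rewrite /in_range all_cat; apply/andP.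
  suff -> : lo = minsym (X ++ Y) by apply: wle_fS.
  apply/eqP; rewrite eqn_leq minsym_le // andbT.
  by case/andP: (allP XYr _ (mem_minsym XY0)).
rewrite mem_cat negb_or => /andP[loX loY].
have range1 Z : lo \notin Z -> in_range lo hi Z -> in_range lo.+1 hi Z.
  by move=> loZ /in_range_split_at; rewrite split_at_notin //= andbT.
have Xr1 := range1 _ loX Xr; have Yr1 := range1 _ loY Yr.
have refl Z : in_range lo.+1 hi Z -> wle_f F Z Z.
  by move=> Zr; rewrite (stable F) //; case: (total _ _ Zr Zr).
rewrite !split_at_notin // (lexmax_le_single (refl _ Xr1) (refl _ Yr1)).
by rewrite (stable F.+1) ?(stable F) // ltnW.
Qed.

Lemma fuel_soundS f lo hi : fuel_sound f lo.+1 hi -> fuel_sound f.+1 lo hi.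
Proof.
move=> sound; have [stable total trans] := sound.
have pieces X : in_range lo hi X -> all (in_range lo.+1 hi) (split_at lo X).
  exact: in_range_split_at.
split=> [[|F] // le_fF X Y Xr Yr|X Y Xr Yr|X Y Z Xr Yr Zr].
- rewrite (wle_f_split sound _ Xr Yr) // (wle_f_split sound _ Xr Yr) //.
  by apply: lexmax_le_congr (pieces _ Xr) (pieces _ Yr) => U V Ur Vr; apply: stable.
- rewrite (wle_f_split sound _ Xr Yr) // (wle_f_split sound _ Yr Xr) //.
  exact: (lexmax_le_total total trans (pieces _ Xr) (pieces _ Yr)).
- rewrite (wle_f_split sound _ Xr Yr) // (wle_f_split sound _ Yr Zr) //.
  rewrite (wle_f_split sound _ Xr Zr) //.
  exact: (lexmax_le_trans trans (pieces _ Xr) (pieces _ Yr) (pieces _ Zr)).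
Qed.

Lemma fuel_sound_range f lo hi : hi < lo + f -> fuel_sound f lo hi.
Proof.
elim: f lo => [|f IHf] lo; first by rewrite addn0; apply: fuel_sound0.
by rewrite addnS -addSn => /IHf; apply: fuel_soundS.
Qed.

Lemma in_range_maxsym s : in_range 0 (maxsym s) s.
Proof. by apply/allP => z; apply: leq_maxsym. Qed.

Lemma wle_wle_f hi X Y : in_range 0 hi X -> in_range 0 hi Y -> wle X Y <-> wle_f hi.+1 X Y.
Proof.
move=> Xr Yr; rewrite /wle; set m := minsym _; set M := maxsym _.
have := in_range_minsym_maxsym (X ++ Y); rewrite -/m -/M /in_range all_cat => /andP[XmM YmM].
have le_M_hi : M <= hi.
  by rewrite maxsym_leq all_cat; apply/andP; split; [move: Xr|move: Yr]; apply: sub_all => z /andP[].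
have [stable _ _] := @fuel_sound_range (M - m).+1 m M ltac:(lia).
by symmetry; apply: stable => //; lia.
Qed.

Lemma wle_total X Y : wle X Y \/ wle Y X.
Proof.
have := in_range_maxsym (X ++ Y); rewrite /in_range all_cat => /andP[Xr Yr].
rewrite (wle_wle_f Xr Yr) (wle_wle_f Yr Xr).
exact: (fuel_total (@fuel_sound_range _ 0 _ (ltnSn _)) Xr Yr).
Qed.

Lemma wle_trans X Y Z : wle X Y -> wle Y Z -> wle X Z.
Proof.
have := in_range_maxsym (X ++ Y ++ Z); rewrite /in_range !all_cat => /and3P[Xr Yr Zr].
rewrite (wle_wle_f Xr Yr) (wle_wle_f Yr Zr) (wle_wle_f Xr Zr).
exact: (fuel_trans (@fuel_sound_range _ 0 _ (ltnSn _)) Xr Yr Zr).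
Qed.


(** * Maximal subsequences of a concatenation *)

Section TotalPreorder.
Variable le : word -> word -> Prop.
Hypothesis le_total : forall x y, le x y \/ le y x.
Hypothesis le_trans : forall x y z, le x y -> le y z -> le x z.

Definition above (y : word) : pred word := fun x => asb (le y x).

Definition max_coll (s : seq word) (g : seq nat) : Prop :=
  sorted ltn g /\ all (fun i => 0 < i <= size s) g /\
  lexmax le [seq nth [::] s i.-1 | i <- g] s.

Lemma sim_refl x : sim le x x.
Proof. by split; case: (le_total x x). Qed.

Lemma greedy_lexmax_total s : lexmax le (greedy le s) s.
Proof. exact: (greedy_lexmax (in2W le_total) (in3W le_trans) (all_predT s)). Qed.

Lemma greedy_sim_lexmax c s : lexmax le c s -> sim_seq le (greedy le s) c.
Proof.
move=> [sub_c max_c]; have [sub_g max_g] := greedy_lexmax_total s.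
by apply: lexle_antisym; [apply: max_c|apply: max_g].
Qed.

Lemma lexmax_sim c c' s : lexmax le c s -> sim_seq le c c' -> subseq c' s -> lexmax le c' s.
Proof.
move=> [_ max_c] sim_cc' sub_c'; split=> // c'' /max_c lexle_c''c.
have lexle_cc' := sim_seq_lexle [::] sim_cc'.
exact: (lexle_trans (in3W le_trans) (all_predT _) (all_predT _) (all_predT _) lexle_c''c lexle_cc').
Qed.

Lemma above_sim y y' x x' : sim le y y' -> sim le x x' -> above y x = above y' x'.
Proof.
move=> [le_yy' le_y'y] [le_xx' le_x'x]; apply/asbP/asbP => [le_yx|le_y'x'].
  exact: le_trans le_y'y (le_trans le_yx le_xx').
exact: le_trans le_yy' (le_trans le_y'x' le_x'x).
Qed.

Lemma above_down y x x' : asb (le x' x) -> above y x' -> above y x.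
Proof. by move=> /asbP le_x'x /asbP le_yx'; apply/asbP; apply: le_trans le_yx' le_x'x. Qed.

Lemma greedy_cat s t y l : greedy le t = y :: l ->
  greedy le (s ++ t) = filter (above y) (greedy le s) ++ greedy le t.
Proof.
move=> greedy_t; have t0 : t != [::] by case: t greedy_t.
have [y' [l' [greedy_t' yt max_y]]] := greedy_head (in2W le_total) (in3W le_trans) (all_predT t) t0.
move: greedy_t' yt max_y; rewrite greedy_t => -[<- _] yt max_y.
have below_t x : all (fun w => asb (le w x)) t = above y x.
  apply/allP/asbP => [below|le_yx w /max_y le_wy]; first exact/asbP/below.
  by apply/asbP; apply: le_trans le_wy le_yx.
elim: s => [|x s IHs] //=; rewrite all_cat below_t IHs.
by case: (all _ s) => //=; case: (above y x).
Qed.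

Lemma lexmax_nth_above y c s i : lexmax le c s -> i < size c ->
  above y (nth [::] c i) = (i < count (above y) c).
Proof.
move=> /greedy_sim_lexmax sim_gc lt_ic.
have above_simr x x' : sim le x x' -> above y x = above y x' := above_sim (sim_refl y).
have lt_ig : i < size (greedy le s) by rewrite (sim_seq_size sim_gc).
rewrite -(count_sim_seq above_simr sim_gc) -(above_simr _ _ (sim_seq_nth [::] sim_gc lt_ig)).
exact: (nth_pairwise (@above_down y) _ (greedy_pairwise le s) lt_ig).
Qed.

Lemma lexmax_cat s t a b : t != [::] -> lexmax le a s -> lexmax le b t ->
  lexmax le (take (count (above (head [::] b)) a) a ++ b) (s ++ t).
Proof.
move=> t0 max_a max_b.
have [y [l [greedy_t _ _]]] := greedy_head (in2W le_total) (in3W le_trans) (all_predT t) t0.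
have sim_a := greedy_sim_lexmax max_a; have := greedy_sim_lexmax max_b.
rewrite greedy_t; case: b max_b => [//|y' b] max_b /= [[le_yy' le_y'y] sim_lb].
have -> : count (above y') a = count (above y) (greedy le s).
  rewrite -(count_sim_seq _ sim_a) => [|x x' sim_xx']; last exact: above_sim (sim_refl y') sim_xx'.
  by apply: eq_count => x; apply: above_sim (conj le_y'y le_yy') (sim_refl x).
apply: (lexmax_sim (greedy_lexmax_total (s ++ t))).
  rewrite (greedy_cat _ greedy_t) greedy_t.
  rewrite (filter_pairwise (@above_down y) (greedy_pairwise le s)).
  by apply: sim_seq_cat; [apply: sim_seq_take|split].
exact: cat_subseq (subseq_trans (take_subseq _ _) max_a.1) max_b.1.
Qed.

Lemma max_coll_cat s t g h : t != [::] -> max_coll s g -> max_coll t h ->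
  let k := \max_(1 <= i < (size g).+1 |
                 asb (le (nth [::] t (nth 0 h 0).-1) (nth [::] s (nth 0 g i.-1).-1))) i in
  max_coll (s ++ t) (take k g ++ [seq size s + j | j <- h]).
Proof.
move=> t0 [g_sorted [g_bnd max_a]] [h_sorted [h_bnd max_b]] k.
set a := map _ g in max_a; set b := map _ h in max_b.
have h0 : 0 < size h.
  by move: (lexmax_neq0 max_b t0); rewrite /b -size_eq0 size_map lt0n.
have -> : k = count (above (head [::] b)) a.
  apply: bigmax_prefix => [|i lt_ig]; first by rewrite -(size_map (fun i => nth [::] s i.-1) g) count_size.
  rewrite /= -(nth_map 0 [::] (fun j => nth [::] t j.-1) h0).
  rewrite -(nth_map 0 [::] (fun i => nth [::] s i.-1) lt_ig).
  by apply: lexmax_nth_above max_a _; rewrite size_map.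
split; first exact: sorted_shift_cat g_sorted g_bnd h_sorted h_bnd _.
split; first by rewrite size_cat; apply: bounded_shift_cat g_bnd h_bnd _.
by rewrite (map_nth_shift_cat g_bnd h_bnd) //; apply: lexmax_cat.
Qed.
End TotalPreorder.

Theorem lemma2 (As Bs : seq word) (g h : seq nat) :
  As != [::] -> Bs != [::] ->
  max_index_coll As g -> max_index_coll Bs h ->
  let k := \max_(1 <= i < (size g).+1 |
                 asb (wle (nth [::] Bs (nth 0 h 0).-1) (nth [::] As (nth 0 g i.-1).-1))) i in
  max_index_coll (As ++ Bs) (take k g ++ [seq size As + j | j <- h]).
Proof.
by move=> _; apply: (max_coll_cat wle_total wle_trans).
Qed.
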